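(* Let $A$ be a finite-dimensional simple associative algebra over a field. If $c\in A$ satisfies $cA\subseteq[A,A]$, then $c=0$.
   Context: $[A,A]$ denotes the linear span of all commutators $xy-yx$, $x,y\in A$. *)

From HB Require Import structures.
From mathcomp Require Import all_boot all_algebra all_field.
Set Implicit Arguments. Unset Strict Implicit. Unset Printing Implicit Defensive.
Import GRing.Theory.
Local Open Scope ring_scope.

(* A finite-dimensional (unital) associative algebra over a field F is an
   [falgType F]. *)

Definition is_two_sided_ideal (F : fieldType) (A : falgType F) (I : {vspace A}) : Prop :=
  forall a x : A, x \in I -> (a * x \in I) /\ (x * a \in I).

(* A is simple: it is nonzero (automatic: 1 != 0 in an falgType) and its only
   two-sided ideals are 0 and A. *)
Definition simple_algebra (F : fieldType) (A : falgType F) : Prop :=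
  (1 : A) != 0 /\
  forall I : {vspace A}, is_two_sided_ideal I -> I = 0%VS \/ I = fullv.

(* x lies in [A,A], the linear span of all commutators a b - b a.
   (Scalars are absorbed: k (ab - ba) = (ka) b - b (ka), so finite sums of
   commutators are exactly the linear span.) *)
Definition in_commutator_span (F : fieldType) (A : falgType F) (x : A) : Prop :=
  exists (n : nat) (a b : 'I_n -> A), x = \sum_(i < n) (a i * b i - b i * a i).

From HB Require Import structures.
From mathcomp Require Import all_boot all_algebra all_field.
From Stdlib Require Import Classical.
Set Implicit Arguments. Unset Strict Implicit. Unset Printing Implicit Defensive.
Import GRing.Theory.
Local Open Scope ring_scope.

(* Let Z be the center of A. Simplicity makes Z a field and gives
   1 = sum_i g_i x h_i for every x != 0. Over a Z-basis w of A we have the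
   Z-valued trace T(x, y) = tr_Z(u |-> x u y), which vanishes on [A,A] in x
   because tr_Z(fg) = tr_Z(gf). It is not identically zero: the F-linear map
   a |-> (sum_i a_i w_j w_i)_j on A^m is injective (by induction on the support
   of a, normalizing one entry to 1 and commuting the others with any y), hence
   onto; so u |-> sum_i a_i u w_i is a matrix unit for some a, and then
   sum_i T(a_i, w_i) = 1. Yet if c != 0 and cA lies in [A,A], then
   x = sum_i g_i c h_i x lies in [A,A] for every x, since g c (h x) = c (h x g)
   modulo commutators. *)

Section CommutatorSpan.
Variables (F : fieldType) (A : falgType F).

Lemma in_commutator_span0 : in_commutator_span (0 : A).
Proof. by exists 0%N, (fun=> 0), (fun=> 0); rewrite big_ord0. Qed.

Lemma in_commutator_spanD (x y : A) :
  in_commutator_span x -> in_commutator_span y -> in_commutator_span (x + y).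
Proof.
move=> [n [a [b ->]]] [k [a' [b' ->]]].
pose glue (f : 'I_n -> A) (f' : 'I_k -> A) i :=
  match split i with inl j => f j | inr j => f' j end.
exists (n + k)%N, (glue a a'), (glue b b'); rewrite big_split_ord.
have splitl j : split (lshift k j) = inl j := unsplitK (inl j).
have splitr j : split (rshift n j) = inr j := unsplitK (inr j).
by congr (_ + _); apply: eq_bigr => i _; rewrite /glue ?splitl ?splitr.
Qed.

Lemma in_commutator_span_sum (I : Type) (r : seq I) (P : pred I) (f : I -> A) :
  (forall i, P i -> in_commutator_span (f i)) ->
  in_commutator_span (\sum_(i <- r | P i) f i).
Proof.
by apply: (big_ind _ in_commutator_span0); apply: in_commutator_spanD.
Qed.

Lemma in_commutator_span_comm (a b : A) : in_commutator_span (a * b - b * a).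
Proof. by exists 1%N, (fun=> a), (fun=> b); rewrite big_ord1. Qed.

End CommutatorSpan.

Section Center.
Variables (F : fieldType) (A : falgType F).

Lemma centerP (z : A) : reflect (forall u, z * u = u * z) (z \in 'Z(fullv)%VS).
Proof.
rewrite memv_cap memvf /=; apply: (iffP centvP) => cz u.
  exact: cz (memvf u).
by move=> _; apply: cz.
Qed.

Lemma center1 : 1 \in 'Z(fullv : {vspace A})%VS.
Proof. by rewrite memv_cap memvf centv1. Qed.

Lemma center_alg (k : F) : k%:A \in 'Z(fullv : {vspace A})%VS.
Proof. by rewrite rpredZ ?center1. Qed.

Definition center_free m (w : 'I_m -> A) :=
  forall z : 'I_m -> A, (forall i, z i \in 'Z(fullv)%VS) ->
  \sum_i z i * w i = 0 -> forall i, z i = 0.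

Definition center_spans m (w : 'I_m -> A) (u : A) :=
  exists2 z : 'I_m -> A, forall i, z i \in 'Z(fullv)%VS & u = \sum_i z i * w i.

Lemma center_free_le_dim m (w : 'I_m -> A) : center_free w -> (m <= \dim {:A})%N.
Proof.
move=> w_free; pose X := [tuple w i | i < m].
suff /eqP <- : \dim <<X>> == m by rewrite dimvS ?subvf.
rewrite -[X in _ == X](size_tuple X); apply/freeP => k Xk0 i.
have /eqP : (k i)%:A = 0 :> A.
  apply: (w_free (fun j => (k j)%:A)) => [j | ]; first exact: center_alg.
  by rewrite -[RHS]Xk0; apply: eq_bigr => j _; rewrite mulr_algl (nth_mktuple _ 0).
by rewrite scaler_eq0 oner_eq0 orbF => /eqP.
Qed.

End Center.

Section Simple.
Variables (F : fieldType) (A : falgType F).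
Hypothesis simpleA : simple_algebra A.

Lemma simple_sandwich1 (x : A) : x != 0 ->
  exists n (g h : 'I_n -> A), 1 = \sum_i g i * x * h i.
Proof.
move=> x_neq0; set b := vbasis {:A}.
pose I := (\sum_(l < \dim {:A}) limg (amulr (x * b`_l)%R))%VS.
have memI u v : u * x * v \in I.
  rewrite (coord_vbasis (memvf v)) mulr_sumr; apply: memv_sumr => l _.
  rewrite -scalerAr -mulrA; apply: memvZ.
  have -> : u * (x * b`_l) = amulr (x * b`_l)%R u by rewrite lfunE.
  by rewrite memv_img ?memvf.
have Ig y : y \in I -> exists g : 'I_(\dim {:A}) -> A, y = \sum_l g l * x * b`_l.
  move=> /memv_sumP [us Ius ->].
  have /fin_all_exists [g gP] l : exists g, us l = g * x * b`_l.
    by have /memv_imgP [g _ ->] := Ius l isT; exists g; rewrite lfunE /= mulrA.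
  by exists g; apply: eq_bigr => l _.
have I_ideal : is_two_sided_ideal I.
  move=> a y /Ig [g ->]; rewrite mulr_sumr mulr_suml.
  by split; apply: memv_suml => l _; rewrite ?mulrA -?(mulrA _ _ a) memI.
have [I0 | If] := simpleA.2 I I_ideal.
  by have := memI 1 1; rewrite I0 memv0 mul1r mulr1 (negbTE x_neq0).
have /Ig [g ->] : 1 \in I by rewrite If memvf.
by exists (\dim {:A}), g, (fun l => b`_l).
Qed.

Lemma center_unit (z : A) : z \in 'Z(fullv)%VS -> z != 0 -> z \is a GRing.unit.
Proof.
move=> /centerP cz /simple_sandwich1 [n [g [h E]]].
apply/unitrP; exists (\sum_i g i * h i); rewrite mulr_sumr mulr_suml E.
by split; apply: eq_bigr => i _; rewrite -?cz mulrA // -mulrA cz mulrA.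
Qed.

Lemma center_free_extend m (w : 'I_m -> A) u :
  center_free w -> ~ center_spans w u ->
  center_free (fun i : 'I_m.+1 => if unlift ord_max i is Some j then w j else u).
Proof.
move=> w_free u_out z zZ; rewrite big_ord_recr /= unlift_none.
have wid j : widen_ord (leqnSn m) j = lift ord_max j.
  by apply: val_inj; rewrite /= /bump leqNgt ltn_ord.
under eq_bigr do rewrite wid liftK.
move=> sum0; have zm0 : z ord_max = 0.
  apply: contra_not_eq u_out => /(center_unit (zZ _)) zm_unit.
  exists (fun j => - ((z ord_max)^-1 * z (lift ord_max j))).
    by move=> j; rewrite rpredN memvM ?memvV.
  rewrite -[u](mulKr zm_unit) -(addr0_eq sum0) mulrN mulr_sumr -sumrN.
  by apply: eq_bigr => j _; rewrite mulNr mulrA.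
rewrite zm0 mul0r addr0 in sum0.
have z0 := w_free _ (fun j => zZ _) sum0.
by move=> i; case: (unliftP ord_max i) => [j ->|->].
Qed.

Lemma exists_center_basis :
  exists m (w : 'I_m -> A), center_free w /\ forall u, center_spans w u.
Proof.
apply: NNPP => no_basis.
suff [w /center_free_le_dim] : exists w : 'I_(\dim {:A}).+1 -> A, center_free w.
  by rewrite ltnn.
elim: (\dim {:A}).+1 => [|m [w w_free]]; first by exists (fun=> 0) => z _ _ [].
have [u u_out] : exists u, ~ center_spans w u.
  by apply: not_all_ex_not => w_spans; apply: no_basis; exists m, w.
by eexists; apply: center_free_extend u_out.
Qed.

Section CenterCoordinates.
Variables (m : nat) (w : 'I_m -> A).
Hypotheses (w_free : center_free w) (w_spans : forall u, center_spans w u).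

Fact zcoord_subproof u : exists z : {ffun 'I_m -> A},
  [forall i, z i \in 'Z(fullv)%VS] && (u == \sum_i z i * w i).
Proof.
have [z zZ ->] := w_spans u; exists (finfun z).
apply/andP; split; first by apply/forallP => i; rewrite ffunE.
by apply/eqP/eq_bigr => i _; rewrite ffunE.
Qed.

Definition zcoord (i : 'I_m) (u : A) : A := xchoose (zcoord_subproof u) i.

Lemma zcoord_center i u : zcoord i u \in 'Z(fullv)%VS.
Proof.
by have /andP [/forallP zZ _] := xchooseP (zcoord_subproof u); apply: zZ.
Qed.

Lemma zcoordE u : u = \sum_i zcoord i u * w i.
Proof. by have /andP [_ /eqP] := xchooseP (zcoord_subproof u). Qed.

Lemma zcoord_unique (z : 'I_m -> A) u :
  (forall i, z i \in 'Z(fullv)%VS) -> u = \sum_i z i * w i ->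
  forall i, zcoord i u = z i.
Proof.
move=> zZ def_u i; apply/eqP; rewrite -subr_eq0; apply/eqP; move: i.
apply: w_free => [i | ]; first by rewrite rpredB ?zcoord_center.
by under eq_bigr do rewrite mulrBl; rewrite sumrB -zcoordE -def_u subrr.
Qed.

Fact zcoord_is_zmod_morphism i : zmod_morphism (zcoord i).
Proof.
move=> u v; apply: (zcoord_unique (z := fun i => zcoord i u - zcoord i v)).
  by move=> j; rewrite rpredB ?zcoord_center.
by under eq_bigr do rewrite mulrBl; rewrite sumrB -!zcoordE.
Qed.

HB.instance Definition _ i :=
  GRing.isZmodMorphism.Build A A (zcoord i) (zcoord_is_zmod_morphism i).

Lemma zcoordZ i z u : z \in 'Z(fullv)%VS -> zcoord i (z * u) = z * zcoord i u.
Proof.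
move=> zZ; apply: (zcoord_unique (z := fun i => z * zcoord i u)).
  by move=> j; rewrite memvM ?zcoord_center.
by rewrite {1}[u]zcoordE mulr_sumr; apply: eq_bigr => j _; rewrite mulrA.
Qed.

Lemma zcoord_basis i j : zcoord i (w j) = (i == j)%:R.
Proof.
apply: (zcoord_unique (z := fun k => (k == j)%:R)).
  by move=> k; rewrite rpredMn ?center1.
by rewrite (bigD1 j) //= eqxx mul1r big1 ?addr0 // => k /negbTE ->; rewrite mul0r.
Qed.

Definition ztrace (f : A -> A) : A := \sum_j zcoord j (f (w j)).

Definition center_linear (f : A -> A) :=
  {morph f : u v / u + v} /\ forall z u, z \in 'Z(fullv)%VS -> f (z * u) = z * f u.

Lemma ztrace_comp f g : center_linear f ->
  ztrace (f \o g) = \sum_j \sum_l zcoord l (g (w j)) * zcoord j (f (w l)).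
Proof.
move=> [fD fZ]; apply: eq_bigr => j _ /=.
have f0 : f 0 = 0 by rewrite -(mul0r 0) fZ ?mul0r ?rpred0.
rewrite {1}[g (w j)]zcoordE (big_morph f fD f0) raddf_sum.
apply: eq_bigr => l _; rewrite fZ ?zcoord_center //.
exact/zcoordZ/zcoord_center.
Qed.

Lemma ztraceC f g : center_linear f -> center_linear g ->
  ztrace (f \o g) = ztrace (g \o f).
Proof.
move=> lin_f lin_g; rewrite !ztrace_comp // exchange_big.
apply: eq_bigr => j _; apply: eq_bigr => l _.
exact/esym/centerP/zcoord_center.
Qed.

Definition lrtrace (y x : A) : A := ztrace (fun u => x * u * y).

Fact lrtrace_is_zmod_morphism y : zmod_morphism (lrtrace y).
Proof.
by move=> x1 x2; rewrite -sumrB; apply: eq_bigr => j _; rewrite !mulrBl raddfB.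
Qed.

HB.instance Definition _ y :=
  GRing.isZmodMorphism.Build A A (lrtrace y) (lrtrace_is_zmod_morphism y).

Lemma lrtrace_comm y a b : lrtrace y (a * b - b * a) = 0.
Proof.
have lin_l : center_linear ( *%R a).
  by split => [u v | z u /centerP cz]; rewrite /= ?mulrDr // mulrA -cz mulrA.
have lin_ry : center_linear (fun u => b * u * y).
  by split => [u v | z u /centerP cz]; rewrite ?mulrDr ?mulrDl // mulrA -cz !mulrA.
apply/eqP; rewrite raddfB subr_eq0; apply/eqP.
have := ztraceC lin_l lin_ry; rewrite /ztrace /=.
by under eq_bigr do rewrite !mulrA; under [RHS]eq_bigr do rewrite !mulrA.
Qed.

Lemma lrtrace_commutator_span y x : in_commutator_span x -> lrtrace y x = 0.
Proof.
by move=> [n [a [b ->]]]; rewrite raddf_sum big1 // => i _; apply: lrtrace_comm.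
Qed.

Definition sandwich_null (a : 'I_m -> A) := forall u, \sum_i a i * u * w i = 0.

Lemma sandwich_nullMl p a : sandwich_null a -> sandwich_null (fun i => p * a i).
Proof.
move=> a0 u; transitivity (p * \sum_i a i * u * w i); last by rewrite a0 mulr0.
by rewrite mulr_sumr; apply: eq_bigr => i _; rewrite !mulrA.
Qed.

Lemma sandwich_nullMr q a : sandwich_null a -> sandwich_null (fun i => a i * q).
Proof. by move=> a0 u; under eq_bigr do rewrite -(mulrA (a _)); apply: a0. Qed.

Lemma sandwich_nullB a b :
  sandwich_null a -> sandwich_null b -> sandwich_null (fun i => a i - b i).
Proof.
move=> a0 b0 u; transitivity (\sum_i a i * u * w i - \sum_i b i * u * w i).
  by rewrite -sumrB; apply: eq_bigr => i _; rewrite !mulrBl.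
by rewrite a0 b0 subr0.
Qed.

Lemma sandwich_null_sum n (a : 'I_n -> 'I_m -> A) :
  (forall l, sandwich_null (a l)) -> sandwich_null (fun i => \sum_l a l i).
Proof.
move=> a0 u; under eq_bigr do rewrite !mulr_suml.
by rewrite exchange_big big1 // => l _; apply: a0.
Qed.

Lemma sandwich_null_normalize a i0 : sandwich_null a -> a i0 != 0 ->
  exists2 a', sandwich_null a' & a' i0 = 1 /\
    [set i | a' i != 0] \subset [set i | a i != 0].
Proof.
move=> a0 /simple_sandwich1 [n [g [h E]]].
exists (fun i => \sum_l g l * a i * h l).
  by apply: sandwich_null_sum => l; apply/sandwich_nullMr/sandwich_nullMl.
split; first by rewrite E.
apply/subsetP => i; rewrite !inE; apply: contraNneq => ->.
by rewrite big1 // => l _; rewrite mulr0 mul0r.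
Qed.

Lemma sandwich_null_eq0 a : sandwich_null a -> forall i, a i = 0.
Proof.
move: {2}#|_| (leqnn #|[set i | a i != 0]|) => n; elim: n a => [|n IH] a.
  rewrite leqn0 => /eqP/card0_eq supp0 _ i; apply/eqP.
  by have := supp0 i; rewrite !inE => /negbFE.
move=> supp_a a0 i0; apply/eqP/negP => /negP ai0_neq0.
have [a' a'0 [a'i0 supp_a']] := sandwich_null_normalize a0 ai0_neq0.
have a'_center i : a' i \in 'Z(fullv)%VS.
  apply/centerP => y; apply/eqP; rewrite -subr_eq0; apply/eqP; move: i.
  apply: (IH (fun i => a' i * y - y * a' i)); last first.
    exact/sandwich_nullB/sandwich_nullMl/a'0/sandwich_nullMr.
  have supp_b :
      [set i | a' i * y - y * a' i != 0] \subset [set i | a i != 0] :\ i0.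
    apply/subsetP => i; rewrite !inE; case: (eqVneq i i0) => [-> | _ /= b_neq0].
      by rewrite a'i0 mulr1 mul1r subrr eqxx.
    have a'_neq0 : a' i != 0.
      by apply: contraNneq b_neq0 => ->; rewrite mul0r mulr0 subrr.
    by have := subsetP supp_a' i; rewrite !inE; apply.
  apply: leq_trans (subset_leq_card supp_b) _.
  by move: supp_a; rewrite (cardsD1 i0) inE ai0_neq0.
have a'_sum0 : \sum_i a' i * w i = 0.
  by rewrite -[RHS](a'0 1); apply: eq_bigr => i _; rewrite mulr1.
by move/eqP: (w_free a'_center a'_sum0 i0); rewrite a'i0 (negbTE simpleA.1).
Qed.

Definition sandwich_map (a : {ffun 'I_m -> A}) : {ffun 'I_m -> A} :=
  [ffun j => \sum_i a i * w j * w i].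

Fact sandwich_map_is_linear : linear sandwich_map.
Proof.
move=> k a b; apply/ffunP => j; rewrite !ffunE scaler_sumr -big_split.
by apply: eq_bigr => i _; rewrite !ffunE !mulrDl -!scalerAl.
Qed.

HB.instance Definition _ := GRing.isSemilinear.Build F {ffun 'I_m -> A}
  {ffun 'I_m -> A} _ sandwich_map (GRing.semilinear_linear sandwich_map_is_linear).

Lemma lker0_sandwich_map : lker (linfun sandwich_map) == 0%VS.
Proof.
rewrite -subv0; apply/subvP => a; rewrite memv_ker lfunE memv0 => /eqP Ga0.
apply/eqP/ffunP => i; rewrite ffunE; move: i; apply: sandwich_null_eq0 => u.
transitivity (\sum_j zcoord j u * sandwich_map a j).
  rewrite {1}[u]zcoordE; under eq_bigr do rewrite mulr_sumr mulr_suml.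
  rewrite exchange_big; apply: eq_bigr => j _; rewrite ffunE mulr_sumr.
  by apply: eq_bigr => i _; rewrite !mulrA (centerP _ (zcoord_center j u)).
by rewrite Ga0 big1 // => j _; rewrite ffunE mulr0.
Qed.

Lemma exists_lrtrace_sum1 : exists a : 'I_m -> A, \sum_i lrtrace (w i) (a i) = 1.
Proof.
have m_gt0 : (0 < m)%N.
  rewrite lt0n; apply: contraNneq simpleA.1 => m0.
  rewrite (zcoordE 1) big1 // => i.
  by move: (ltn_ord i); rewrite [X in (_ < X)%N]m0.
pose i0 := Ordinal m_gt0.
pose t : {ffun 'I_m -> A} := [ffun j => if j == i0 then w j else 0].
pose a := ((linfun sandwich_map)^-1)%VF t.
have Ga : sandwich_map a = t.
  by rewrite -(lfunE sandwich_map) lker0_lfunVK ?lker0_sandwich_map.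
exists a; transitivity (\sum_j zcoord j (t j)).
  by rewrite -Ga exchange_big; apply: eq_bigr => j _; rewrite ffunE raddf_sum.
rewrite (bigD1 i0) //= big1 => [|j /negbTE j_neq]; rewrite ffunE ?j_neq ?raddf0 //.
by rewrite eqxx zcoord_basis eqxx addr0.
Qed.

End CenterCoordinates.

Lemma all_in_commutator_span (c : A) : c != 0 ->
  (forall a, in_commutator_span (c * a)) -> forall x : A, in_commutator_span x.
Proof.
move=> /simple_sandwich1 [n [g [h E]]] cA x.
rewrite -[x]mul1r E mulr_suml; apply: in_commutator_span_sum => i _.
set y := h i * x.
have -> : g i * c * h i * x = (g i * (c * y) - c * y * g i) + c * (y * g i).
  by rewrite !mulrA subrK.
exact/in_commutator_spanD/cA/in_commutator_span_comm.
Qed.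

Lemma not_all_in_commutator_span : ~ (forall x : A, in_commutator_span x).
Proof.
move=> all_comm; have [m [w [w_free w_spans]]] := exists_center_basis.
have [a sum1] := exists_lrtrace_sum1 w_free w_spans.
move: simpleA.1; rewrite -sum1 big1 ?eqxx // => i _.
exact: lrtrace_commutator_span.
Qed.

End Simple.

Theorem lemma2p1 (F : fieldType) (A : falgType F) (c : A) :
  simple_algebra A ->
  (forall a : A, in_commutator_span (c * a)) ->
  c = 0.
Proof.
move=> simpleA cA; apply/eqP; apply: contraT => c_neq0; exfalso.
apply: (not_all_in_commutator_span simpleA).
exact: (all_in_commutator_span simpleA c_neq0 cA).
Qed.
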